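(* Let $q\ge1$ and assume Hypothesis (H$_q$). Suppose moreover $|f'(u)|\le M$ for all $u\in[ma,b]$. Then for all $x\in[a,b]$ and $\theta>0$, $$\Big|\frac{(x-a)^\theta+(b-x)^\theta}{b-a}f(mx)-\frac{\Gamma(\theta+1)}{m^\theta(b-a)}\Big[J^\theta_{(mx)^-}f(ma)+J^\theta_{(mx)^+}f(mb)\Big]\Big|\le\frac{mM}{\theta+1}\Big(\frac{\alpha m+\theta+1}{\alpha+\theta+1}\Big)^{\frac1q}\frac{(x-a)^{\theta+1}+(b-x)^{\theta+1}}{b-a}.$$
   Context: Let $\Gamma$ denote Euler's Gamma function. For $\theta>0$ and $x\in[a,b]$: $J^\theta_{(mx)^-}f(ma)=\frac{1}{\Gamma(\theta)}\int_{ma}^{mx}(s-ma)^{\theta-1}f(s)\,ds$ and $J^\theta_{(mx)^+}f(mb)=\frac{1}{\Gamma(\theta)}\int_{mx}^{mb}(mb-s)^{\theta-1}f(s)\,ds$ (each equal to $0$ if its interval of integration is degenerate). $(\alpha,m)$-convexity: for $(\alpha,m)\in[0,1]\times(0,1]$ and an interval $K\subseteq[0,\infty)$, a function $g:K\to\mathbb{R}$ is $(\alpha,m)$-convex on $K$ if $g(tX+m(1-t)Y)\le t^\alpha g(X)+m(1-t^\alpha)g(Y)$ for all $X,Y\in K$ and $t\in[0,1]$ with $tX+m(1-t)Y\in K$ (convention $0^0=1$). Hypothesis (H$_q$): $I\subseteq[0,\infty)$ is an interval, $f:I\to\mathbb{R}$ is differentiable on the interior $I^\circ$, $m\in(0,1]$,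 $\alpha\in[0,1]$, $a<b$ with $ma,b\in I^\circ$, $f'$ is Lebesgue integrable on $[ma,mb]$, and $|f'|^q$ is $(\alpha,m)$-convex on $[ma,b]$. *)

From Stdlib Require Import Reals Lra ClassicalEpsilon.
Open Scope R_scope.

Definition rpow (t s : R) : R :=
  if Req_EM_T t 0 then (if Req_EM_T s 0 then 1 else 0) else Rpower t s.

Definition RInt_val (g : R -> R) (c d v : R) : Prop :=
  exists pr : Riemann_integrable g c d, RiemannInt pr = v.

Definition is_improper_int (g : R -> R) (a b L : R) : Prop :=
  forall eps, 0 < eps -> exists del, 0 < del /\
    forall c d, a < c < a + del -> b - del < d < b -> c <= d ->
      exists v, RInt_val g c d v /\ Rabs (v - L) < eps.

(* The integral value over (a,b) (chosen by epsilon; unique when a < b). *)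
Definition improper_int (g : R -> R) (a b : R) : R :=
  epsilon (inhabits 0) (is_improper_int g a b).

Definition is_Gamma (th G : R) : Prop :=
  forall eps, 0 < eps -> exists del, 0 < del /\
    forall c d, 0 < c < del -> / del < d ->
      exists v, RInt_val (fun t => Rpower t (th - 1) * exp (- t)) c d v
                /\ Rabs (v - G) < eps.

Definition Gamma (th : R) : R := epsilon (inhabits 0) (is_Gamma th).

Definition J_left (th m a x : R) (f : R -> R) : R :=
  if Rle_dec (m * x) (m * a) then 0
  else / Gamma th * improper_int (fun s => Rpower (s - m * a) (th - 1) * f s) (m * a) (m * x).

Definition J_right (th m x b : R) (f : R -> R) : R :=
  if Rle_dec (m * b) (m * x) then 0
  else / Gamma th * improper_int (fun s => Rpower (m * b - s) (th - 1) * f s) (m * x) (m * b).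

Definition nonneg_interval (I : R -> Prop) : Prop :=
  (forall x y z, I x -> I z -> x <= y <= z -> I y) /\ (forall x, I x -> 0 <= x).

Definition alpha_m_convex (alpha m lo hi : R) (g : R -> R) : Prop :=
  forall X Y t, lo <= X <= hi -> lo <= Y <= hi -> 0 <= t <= 1 ->
    lo <= t * X + m * (1 - t) * Y <= hi ->
    g (t * X + m * (1 - t) * Y) <= rpow t alpha * g X + m * (1 - rpow t alpha) * g Y.

(* Splitting the error into a left and a right part, each part is, up to the
   factor th / (m^th (b - a)) and because Gamma (th + 1) = th Gamma th, the difference
   between f (m x) times the total mass (u - p)^th / th of the weight (s - p)^(th - 1) on an
   interval (p,u) and the weighted integral of f.  Writing f (u) - f (s) as an integral of f'
   and integrating by parts, this difference is controlled by any pointwise bound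
   |f'| <= A + C ((r - p)/(u - p))^alpha ([fractional_mean_estimate]).  Such a bound follows
   from the (alpha,m)-convexity of |f'|^q ([convex_power_bound]) after linearising
   y |-> y^(1/q) by its tangent at the average K = (alpha m + th + 1)/(alpha + th + 1). *)

From Pilot Require Import Defs.
From Stdlib Require Import Reals Lra ClassicalEpsilon FunctionalExtensionality.
From Coquelicot Require Import Coquelicot.
Open Scope R_scope.

Lemma Rpower_pos x y : 0 < Rpower x y.
Proof. apply exp_pos. Qed.

Lemma Rpower_succ x y : 0 < x -> Rpower x (y + 1) = Rpower x y * x.
Proof. intro Hx; rewrite Rpower_plus, Rpower_1; auto. Qed.

Lemma Rpower_div x y e : 0 < x -> 0 < y -> Rpower (x / y) e = Rpower x e * Rpower y (- e).
Proof.
  intros Hx Hy. unfold Rdiv. rewrite <- Rpower_mult_distr by (try apply Rinv_0_lt_compat; auto).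
  f_equal. unfold Rpower. rewrite ln_Rinv by auto. f_equal. ring.
Qed.

Lemma Rpower_pred x e : 0 < x -> Rpower x (e - 1) = Rpower x e / x.
Proof. intro Hx. unfold Rminus. rewrite Rpower_plus, Rpower_Ropp, Rpower_1; auto. Qed.

Lemma Rpower_small th eps : 0 < th -> 0 < eps ->
  exists del, 0 < del /\ forall y, 0 < y < del -> Rpower y th < eps.
Proof.
  intros Hth He. exists (Rpower eps (/ th)). split; [apply Rpower_pos|].
  intros y Hy.
  assert (E : Rpower (Rpower eps (/ th)) th = eps).
  { rewrite Rpower_mult. replace (/ th * th) with 1 by (field; lra). apply Rpower_1; auto. }
  rewrite <- E. apply Rlt_Rpower_l; lra.
Qed.

(* Bernoulli's inequality z^e <= 1 + e (z - 1) for an exponent e in [0,1]: it follows by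
   averaging the tangent-line bounds of exp at e ln z. *)
Lemma Rpower_bernoulli z e : 0 < z -> 0 <= e <= 1 -> Rpower z e <= 1 + e * (z - 1).
Proof.
  intros Hz He. unfold Rpower.
  assert (tangent : forall v, exp (e * ln z) * (1 + v - e * ln z) <= exp v).
  { intro v. replace v with (e * ln z + (v - e * ln z)) at 2 by ring. rewrite exp_plus.
    apply Rmult_le_compat_l; [left; apply exp_pos|]. pose proof (exp_ineq1_le (v - e * ln z)); lra. }
  pose proof (tangent (ln z)) as T1. pose proof (tangent 0) as T0.
  rewrite exp_ln in T1 by auto. rewrite exp_0 in T0.
  pose proof (exp_pos (e * ln z)).
  assert (e * (exp (e * ln z) * (1 + ln z - e * ln z)) <= e * z) by (apply Rmult_le_compat_l; lra).
  assert ((1 - e) * (exp (e * ln z) * (1 + 0 - e * ln z)) <= (1 - e) * 1)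
    by (apply Rmult_le_compat_l; lra).
  nra.
Qed.

Lemma Rpower_tangent y K e : 0 < y -> 0 < K -> 0 <= e <= 1 ->
  Rpower y e <= Rpower K e + e * Rpower K (e - 1) * (y - K).
Proof.
  intros Hy HK He.
  pose proof (Rpower_bernoulli (y / K) e ltac:(apply Rdiv_lt_0_compat; auto) He) as B.
  assert (E : Rpower y e = Rpower K e * Rpower (y / K) e).
  { rewrite Rpower_mult_distr by (try apply Rdiv_lt_0_compat; auto). f_equal; field; lra. }
  rewrite E, Rpower_pred by auto. pose proof (Rpower_pos K e).
  apply Rle_trans with (Rpower K e * (1 + e * (y / K - 1))); [apply Rmult_le_compat_l; lra|].
  right; field; lra.
Qed.

Lemma rpow_pos_eq t s : 0 < t -> rpow t s = Rpower t s.
Proof. intro H. unfold rpow. destruct (Req_EM_T t 0); [lra|auto]. Qed.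

Lemma rpow_0_l s : s <> 0 -> rpow 0 s = 0.
Proof. intro H. unfold rpow. destruct (Req_EM_T 0 0); [|lra]. destruct (Req_EM_T s 0); [lra|auto]. Qed.

Lemma rpow_ge0 t s : 0 <= rpow t s.
Proof.
  unfold rpow. destruct (Req_EM_T t 0); [destruct (Req_EM_T s 0); lra|left; apply Rpower_pos].
Qed.

Lemma rpow_le_compat z M s : 0 < s -> 0 <= z <= M -> rpow z s <= rpow M s.
Proof.
  intros Hs Hz. destruct (Req_dec z 0) as [->|Hz0].
  - rewrite rpow_0_l by lra. apply rpow_ge0.
  - rewrite !rpow_pos_eq by lra. apply Rle_Rpower_l; lra.
Qed.

Lemma rpow_le_1 t e : 0 <= t <= 1 -> 0 <= e -> rpow t e <= 1.
Proof.
  intros Ht He. destruct (Req_dec t 0) as [->|Ht0].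
  - unfold rpow. destruct (Req_EM_T 0 0); [|lra]. destruct (Req_EM_T e 0); lra.
  - rewrite rpow_pos_eq by lra. unfold Rpower. rewrite <- exp_0.
    assert (ln t <= 0) by (rewrite <- ln_1; apply ln_le; lra).
    assert (Hneg : e * ln t <= 0) by nra.
    destruct Hneg as [Hlt| ->]; [left; apply exp_increasing; auto|lra].
Qed.

Lemma derivable_pt_lim_linear k x : derivable_pt_lim (fun s => k * s) x k.
Proof.
  pose proof (derivable_pt_lim_scal id k x 1 (derivable_pt_lim_id x)) as D.
  rewrite Rmult_1_r in D. exact D.
Qed.

Lemma derivable_pt_lim_reflect f r l : derivable_pt_lim f (- r) l ->
  derivable_pt_lim (fun z => f (- z)) r (- l).
Proof.
  intro D. replace (- l) with (l * - (1)) by ring.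
  exact (derivable_pt_lim_comp Ropp f r (- (1)) l
           (derivable_pt_lim_opp id r 1 (derivable_pt_lim_id r)) D).
Qed.

Lemma derivable_pt_lim_Rpower_shift e p s : p < s ->
  derivable_pt_lim (fun s => Rpower (s - p) e) s (e * Rpower (s - p) (e - 1)).
Proof.
  intro H.
  pose proof (derivable_pt_lim_comp (fun s => s - p) (fun y => Rpower y e) s 1
                (e * Rpower (s - p) (e - 1))) as D.
  replace (e * Rpower (s - p) (e - 1)) with (e * Rpower (s - p) (e - 1) * 1) by ring.
  apply D; [|apply derivable_pt_lim_power; lra].
  replace 1 with (1 - 0) by ring.
  apply derivable_pt_lim_minus; [apply derivable_pt_lim_id|apply derivable_pt_lim_const].
Qed.

Lemma continuity_pt_Rpower_shift e p s : p < s -> continuity_pt (fun s => Rpower (s - p) e) s.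
Proof.
  intro H. apply derivable_continuous_pt.
  exists (e * Rpower (s - p) (e - 1)). apply derivable_pt_lim_Rpower_shift; auto.
Qed.

Lemma ex_RInt_continuity f a b : a <= b -> (forall z, a <= z <= b -> continuity_pt f z) ->
  ex_RInt f a b.
Proof.
  intros Hab H. apply (@ex_RInt_continuous R_CompleteNormedModule). intros z Hz.
  apply (proj1 (continuity_pt_filterlim f z)), H.
  rewrite Rmin_left, Rmax_right in Hz; auto.
Qed.

Lemma RInt_antiderivative F f a b : a <= b ->
  (forall t, a <= t <= b -> derivable_pt_lim F t (f t)) ->
  (forall t, a <= t <= b -> continuity_pt f t) -> RInt f a b = F b - F a :> R.
Proof.
  intros Hab HD HC. apply is_RInt_unique.
  apply (@is_RInt_derive R_CompleteNormedModule F f a b).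
  - intros t Ht. rewrite Rmin_left, Rmax_right in Ht; auto. apply is_derive_Reals, HD; auto.
  - intros t Ht. rewrite Rmin_left, Rmax_right in Ht; auto.
    apply (proj1 (continuity_pt_filterlim f t)), HC; auto.
Qed.

Lemma RInt_abs_le_antiderivative h F F' a b : a <= b ->
  (forall t, a <= t <= b -> continuity_pt h t) ->
  (forall t, a <= t <= b -> derivable_pt_lim F t (F' t)) ->
  (forall t, a <= t <= b -> continuity_pt F' t) ->
  (forall t, a < t < b -> Rabs (h t) <= F' t) ->
  Rabs (RInt h a b) <= F b - F a.
Proof.
  intros Hab Hh HD HC Hle.
  apply Rle_trans with (RInt (fun t => Rabs (h t)) a b).
  - apply abs_RInt_le; auto. apply ex_RInt_continuity; auto.
  - rewrite <- (RInt_antiderivative F F' a b); auto. apply RInt_le; auto.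
    + apply ex_RInt_continuity; auto. intros z Hz.
      apply (continuity_pt_comp h Rabs z); [apply Hh; auto|apply Rcontinuity_abs].
    + apply ex_RInt_continuity; auto.
Qed.

Lemma RInt_Chasles_R g a b c : ex_RInt g a b -> ex_RInt g b c ->
  RInt g a c = RInt g a b + RInt g b c :> R.
Proof. intros; symmetry; apply (RInt_Chasles g a b c); auto. Qed.

Lemma RInt_scal_minus f1 f2 k a b : ex_RInt f1 a b -> ex_RInt f2 a b ->
  RInt (fun s => k * f1 s - f2 s) a b = k * RInt f1 a b - RInt f2 a b :> R.
Proof.
  intros H1 H2.
  pose proof (RInt_minus (V:=R_CompleteNormedModule) (fun s => k * f1 s) f2 a b) as E.
  pose proof (RInt_scal (V:=R_CompleteNormedModule) f1 a b k H1) as E2.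
  unfold minus, plus, opp, scal in E, E2; simpl in E, E2. unfold mult in E2; simpl in E2.
  unfold Rminus. rewrite E; [|apply (ex_RInt_scal (V:=R_NormedModule) f1 a b k H1)|exact H2].
  rewrite E2. reflexivity.
Qed.

Lemma RInt_val_continuity g a b : a <= b -> (forall t, a <= t <= b -> continuity_pt g t) ->
  Defs.RInt_val g a b (RInt g a b).
Proof.
  intros Hab H. assert (E : ex_RInt g a b) by (apply ex_RInt_continuity; auto).
  exists (ex_RInt_Reals_0 _ _ _ E). symmetry; apply RInt_Reals.
Qed.

Lemma RInt_val_RInt g c d v : Defs.RInt_val g c d v -> RInt g c d = v :> R.
Proof. intros [pr E]. rewrite <- E. apply RInt_Reals. Qed.

Lemma diff_le_of_derivative_bound (F F' P P' : R -> R) s u : s <= u ->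
  (forall r, s <= r <= u -> derivable_pt_lim F r (F' r)) ->
  (forall r, s <= r <= u -> derivable_pt_lim P r (P' r)) ->
  (forall r, s <= r <= u -> Rabs (F' r) <= P' r) ->
  Rabs (F u - F s) <= P u - P s.
Proof.
  intros Hsu HF HP Hle. destruct Hsu as [Hsu| <-].
  2: { rewrite Rminus_diag, Rabs_R0. lra. }
  destruct (MVT_cor2 (fun r => F r - P r) (fun r => F' r - P' r) s u Hsu) as [c1 [E1 H1]].
  { intros c Hc. apply derivable_pt_lim_minus; auto. }
  destruct (MVT_cor2 (fun r => F r + P r) (fun r => F' r + P' r) s u Hsu) as [c2 [E2 H2]].
  { intros c Hc. apply derivable_pt_lim_plus; auto. }
  pose proof (Hle c1 ltac:(lra)) as B1. pose proof (Hle c2 ltac:(lra)) as B2.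
  apply Rabs_le_between in B1; apply Rabs_le_between in B2.
  apply Rabs_le. nra.
Qed.

Definition right_limit (P : R -> R) (p l : R) : Prop :=
  forall eps, 0 < eps -> exists del, 0 < del /\
    forall c, p < c < p + del -> Rabs (P c - l) < eps.

Definition limit_at_infinity (P : R -> R) (l : R) : Prop :=
  forall eps, 0 < eps -> exists N, forall d, N < d -> Rabs (P d - l) < eps.

Lemma ballR (x e y : R) : ball x e y <-> Rabs (y - x) < e.
Proof. reflexivity. Qed.

(* Completeness of R, through the Cauchy filter of P at p+. *)
Lemma right_limit_of_cauchy (P : R -> R) p :
  (forall eps, 0 < eps -> exists del, 0 < del /\
     forall c1 c2, p < c1 < p + del -> p < c2 < p + del -> Rabs (P c1 - P c2) < eps) ->
  exists l, right_limit P p l.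
Proof.
  intro HC.
  set (F := filtermap P (at_right p)).
  assert (PF : ProperFilter F) by (apply filtermap_proper_filter, at_right_proper_filter).
  assert (CF : cauchy F).
  { intro eps. destruct (HC eps (cond_pos eps)) as [del [Hd H]].
    exists (P (p + del / 2)). unfold F, filtermap, at_right, within, locally.
    exists (mkposreal del Hd). intros y Hy Hpy. apply ballR. rewrite ballR in Hy. simpl in Hy.
    apply H; split_Rabs; lra. }
  exists (lim F). intros eps He.
  pose proof (complete_cauchy F PF CF (mkposreal eps He)) as H.
  unfold F, filtermap, at_right, within, locally in H. destruct H as [del H].
  exists del. split; [apply cond_pos|]. intros c Hc. apply ballR. apply H; [|lra].
  apply ballR. pose proof (cond_pos del). split_Rabs; lra.
Qed.

(* Reduced to right limits at 0 through the change of variable d = 1/c. *)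
Lemma limit_at_infinity_of_cauchy (P : R -> R) :
  (forall eps, 0 < eps -> exists N, forall d1 d2, N < d1 -> N < d2 -> Rabs (P d1 - P d2) < eps) ->
  exists l, limit_at_infinity P l.
Proof.
  intro HC.
  assert (large_inv : forall N c, 0 < c < / (Rabs N + 1) -> N < / c).
  { intros N c Hc. apply Rlt_le_trans with (Rabs N + 1); [pose proof (Rle_abs N); lra|].
    rewrite <- (Rinv_inv (Rabs N + 1)). apply Rinv_le_contravar; lra. }
  destruct (right_limit_of_cauchy (fun z => P (/ z)) 0) as [l Hl].
  { intros eps He. destruct (HC eps He) as [N HN].
    exists (/ (Rabs N + 1)). split; [apply Rinv_0_lt_compat; pose proof (Rabs_pos N); lra|].
    intros c1 c2 H1 H2. apply HN; apply large_inv; lra. }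
  exists l. intros eps He. destruct (Hl eps He) as [del [Hd H]].
  exists (/ del). intros d Hd'. assert (Hd0 : 0 < d).
  { apply Rlt_trans with (/ del); auto. apply Rinv_0_lt_compat; auto. }
  rewrite <- (Rinv_inv d). apply H. split.
  - apply Rinv_0_lt_compat; lra.
  - rewrite Rplus_0_l, <- (Rinv_inv del). apply Rinv_lt_contravar; auto.
    apply Rmult_lt_0_compat; auto. apply Rinv_0_lt_compat; auto.
Qed.

Lemma improper_int_unique g a b L : a < b -> is_improper_int g a b L -> improper_int g a b = L.
Proof.
  intros Hab HL. assert (HL' : is_improper_int g a b (improper_int g a b)).
  { unfold improper_int. apply epsilon_spec. exists L; auto. }
  apply cond_eq. intros eps He.
  destruct (HL (eps / 2) ltac:(lra)) as [d1 [Hd1 K1]].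
  destruct (HL' (eps / 2) ltac:(lra)) as [d2 [Hd2 K2]].
  set (dl := Rmin (Rmin d1 d2) ((b - a) / 2)).
  assert (0 < dl) by (apply Rmin_pos; [apply Rmin_pos|]; lra).
  assert (dl <= Rmin d1 d2 /\ dl <= (b - a) / 2) as [Hdl1 Hdl2] by (split; [apply Rmin_l|apply Rmin_r]).
  pose proof (Rmin_l d1 d2). pose proof (Rmin_r d1 d2).
  destruct (K1 (a + dl / 2) (b - dl / 2)) as [v1 [V1 E1]]; try lra.
  destruct (K2 (a + dl / 2) (b - dl / 2)) as [v2 [V2 E2]]; try lra.
  apply RInt_val_RInt in V1. apply RInt_val_RInt in V2. rewrite V1 in V2. subst v2.
  replace (improper_int g a b - L) with ((v1 - L) - (v1 - improper_int g a b)) by ring.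
  eapply Rle_lt_trans; [apply Rabs_triang|]. rewrite Rabs_Ropp. lra.
Qed.

Lemma is_improper_int_reflect g a b L :
  is_improper_int (fun y => g (- y)) (- b) (- a) L -> is_improper_int g a b L.
Proof.
  intros H eps He. destruct (H eps He) as [del [Hd K]].
  exists del. split; auto. intros c d Hc Hd' Hcd.
  destruct (K (- d) (- c)) as [v [[pr Ev] Ev2]]; try lra.
  exists v. split; auto.
  assert (I1 : is_RInt (fun y => g (- y)) (- d) (- c) v).
  { rewrite <- Ev, <- RInt_Reals. apply (RInt_correct (V:=R_CompleteNormedModule)).
    apply ex_RInt_Reals_1; auto. }
  apply (is_RInt_comp_opp (V:=R_NormedModule)) in I1.
  apply (is_RInt_swap (V:=R_NormedModule)) in I1.
  apply (is_RInt_opp (V:=R_NormedModule)) in I1. rewrite opp_opp in I1.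
  assert (I2 : is_RInt g c d v).
  { eapply (is_RInt_ext (V:=R_NormedModule)); [|exact I1]. intros z _. simpl.
    unfold opp; simpl. rewrite !Ropp_involutive. reflexivity. }
  assert (E : ex_RInt g c d) by (eexists; exact I2).
  exists (ex_RInt_Reals_0 _ _ _ E). rewrite <- RInt_Reals.
  exact (is_RInt_unique (V:=R_CompleteNormedModule) _ _ _ _ I2).
Qed.

(* A function continuous on (p,u] whose integrals over [c,u] converge as c -> p+ has an
   improper integral over (p,u): near u it is bounded, so the upper limit is harmless. *)
Lemma is_improper_int_of_right_limit g p u l : p < u ->
  (forall s, p < s <= u -> continuity_pt g s) ->
  right_limit (fun c => RInt g c u) p l -> is_improper_int g p u l.
Proof.
  intros Hpu Hgc Hl eps He.
  assert (Hex : forall c d, p < c <= d -> d <= u -> ex_RInt g c d).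
  { intros c d H1 H2. apply ex_RInt_continuity; [lra|]. intros; apply Hgc; lra. }
  destruct (Hl (eps / 2) ltac:(lra)) as [d1 [Hd1 H1]].
  set (y0 := (p + u) / 2).
  destruct (continuity_ab_maj (fun s => Rabs (g s)) y0 u) as [Mx [HMx _]].
  { unfold y0; lra. }
  { intros c Hc. apply (continuity_pt_comp g Rabs c); [apply Hgc; unfold y0 in Hc; lra|].
    apply Rcontinuity_abs. }
  set (Bg := Rabs (g Mx)). assert (HBg : 0 <= Bg) by apply Rabs_pos.
  set (del := Rmin d1 (Rmin ((u - p) / 2) (eps / (2 * (Bg + 1))))).
  pose proof (Rmin_l d1 (Rmin ((u - p) / 2) (eps / (2 * (Bg + 1))))) as Hdel1.
  pose proof (Rmin_r d1 (Rmin ((u - p) / 2) (eps / (2 * (Bg + 1))))) as Hdel2.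
  pose proof (Rmin_l ((u - p) / 2) (eps / (2 * (Bg + 1)))) as Hdel3.
  pose proof (Rmin_r ((u - p) / 2) (eps / (2 * (Bg + 1)))) as Hdel4.
  assert (Heps : 0 < eps / (2 * (Bg + 1))) by (apply Rdiv_lt_0_compat; lra).
  exists del. split; [apply Rmin_pos; [lra|apply Rmin_pos; lra]|].
  intros c d Hc Hd Hcd. fold del in Hdel1, Hdel2.
  exists (RInt g c d). split; [apply RInt_val_continuity; auto; intros; apply Hgc; lra|].
  assert (Hcu : Rabs (RInt g c u - l) < eps / 2) by (apply H1; lra).
  rewrite (RInt_Chasles_R g c d u) in Hcu by (apply Hex; lra).
  assert (Hdu : Rabs (RInt g d u) <= (u - d) * Bg).
  { apply abs_RInt_le_const; [lra|apply Hex; lra|]. intros t Ht. apply HMx. unfold y0; lra. }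
  assert ((u - d) * Bg <= eps / 2).
  { apply Rle_trans with (eps / (2 * (Bg + 1)) * Bg); [apply Rmult_le_compat_r; lra|].
    apply (Rmult_le_reg_r (2 * (Bg + 1))); [lra|]. field_simplify; lra. }
  replace (RInt g c d - l) with ((RInt g c d + RInt g d u - l) - RInt g d u) by ring.
  eapply Rle_lt_trans; [apply Rabs_triang|]. rewrite Rabs_Ropp. lra.
Qed.

(** Integrals against the weight (s - p)^(th - 1), th > 0, which is integrable at p. *)

Definition weighted (p th : R) (F : R -> R) (s : R) : R := Rpower (s - p) (th - 1) * F s.

Lemma continuity_pt_weighted p th F s : p < s -> continuity_pt F s ->
  continuity_pt (weighted p th F) s.
Proof. intros Hs HF. apply continuity_pt_mult; [apply continuity_pt_Rpower_shift|]; auto. Qed.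

Lemma RInt_weight p th c d : 0 < th -> p < c <= d ->
  RInt (fun s => Rpower (s - p) (th - 1)) c d = (Rpower (d - p) th - Rpower (c - p) th) / th :> R.
Proof.
  intros Hth Hc.
  rewrite (RInt_antiderivative (fun s => / th * Rpower (s - p) th)); [field; lra|lra| |].
  - intros t Ht. replace (Rpower (t - p) (th - 1)) with (/ th * (th * Rpower (t - p) (th - 1)))
      by (field; lra).
    apply derivable_pt_lim_scal, derivable_pt_lim_Rpower_shift; lra.
  - intros t Ht. apply continuity_pt_Rpower_shift; lra.
Qed.

Lemma weighted_integral_abs_le F p th B c1 c2 : 0 < th -> p < c1 <= c2 ->
  (forall s, c1 <= s <= c2 -> continuity_pt F s) ->
  (forall s, c1 <= s <= c2 -> Rabs (F s) <= B) ->
  Rabs (RInt (weighted p th F) c1 c2) <= B / th * (Rpower (c2 - p) th - Rpower (c1 - p) th).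
Proof.
  intros Hth Hc HFc HFB. rewrite Rmult_minus_distr_l.
  apply (RInt_abs_le_antiderivative _ (fun s => B / th * Rpower (s - p) th)
           (fun s => B * Rpower (s - p) (th - 1))); [lra| | | |].
  - intros t Ht. apply continuity_pt_weighted; [lra|auto].
  - intros t Ht. replace (B * Rpower (t - p) (th - 1)) with (B / th * (th * Rpower (t - p) (th - 1)))
      by (field; lra).
    apply derivable_pt_lim_scal, derivable_pt_lim_Rpower_shift; lra.
  - intros t Ht. apply continuity_pt_mult; [apply continuity_pt_const; intros ? ?; auto|].
    apply continuity_pt_Rpower_shift; lra.
  - intros t Ht. unfold weighted. rewrite Rabs_mult, Rabs_pos_eq by (left; apply Rpower_pos).
    rewrite Rmult_comm. apply Rmult_le_compat_r; [left; apply Rpower_pos|]. apply HFB; lra.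
Qed.

Lemma weighted_integral_right_limit F p u th B : p < u -> 0 < th ->
  (forall s, p < s <= u -> continuity_pt F s) ->
  (forall s, p < s <= u -> Rabs (F s) <= B) ->
  exists l, right_limit (fun c => RInt (weighted p th F) c u) p l.
Proof.
  intros Hpu Hth HFc HFB.
  assert (HB : 0 <= B) by (pose proof (HFB u ltac:(lra)); pose proof (Rabs_pos (F u)); lra).
  assert (Hex : forall c d, p < c <= d -> d <= u -> ex_RInt (weighted p th F) c d).
  { intros c d H1 H2. apply ex_RInt_continuity; [lra|].
    intros; apply continuity_pt_weighted; [lra|apply HFc; lra]. }
  apply right_limit_of_cauchy. intros eps He.
  destruct (Rpower_small th (eps * th / (B + 1)) Hth) as [d1 [Hd1 Hs]].
  { apply Rdiv_lt_0_compat; [apply Rmult_lt_0_compat|]; lra. }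
  exists (Rmin d1 (u - p)). split; [apply Rmin_pos; lra|].
  pose proof (Rmin_l d1 (u - p)). pose proof (Rmin_r d1 (u - p)).
  assert (K : forall c1 c2, p < c1 < p + Rmin d1 (u - p) -> p < c2 < p + Rmin d1 (u - p) ->
             c1 <= c2 -> Rabs (RInt (weighted p th F) c1 u - RInt (weighted p th F) c2 u) < eps).
  { intros c1 c2 H1 H2 H12.
    rewrite (RInt_Chasles_R _ c1 c2 u) by (apply Hex; lra).
    unfold Rminus. rewrite Rplus_assoc, Rplus_opp_r, Rplus_0_r.
    eapply Rle_lt_trans.
    { apply (weighted_integral_abs_le F p th B); try lra.
      - intros; apply HFc; lra.
      - intros; apply HFB; lra. }
    pose proof (Rpower_pos (c1 - p) th).
    assert (Rpower (c2 - p) th < eps * th / (B + 1)) by (apply Hs; lra).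
    apply Rle_lt_trans with (B / th * (eps * th / (B + 1))).
    - apply Rmult_le_compat_l; [apply Rdiv_le_0_compat|]; lra.
    - replace (B / th * (eps * th / (B + 1))) with (eps * (B / (B + 1))) by (field; lra).
      assert (B / (B + 1) < 1) by (apply (Rmult_lt_reg_r (B + 1)); [lra|]; field_simplify; lra).
      nra. }
  intros c1 c2 H1 H2. destruct (Rle_or_lt c1 c2).
  - apply K; auto.
  - rewrite Rabs_minus_sym. apply K; auto; lra.
Qed.

(** Weighted mean of a function with a power-type modulus of continuity at u:
    |F u - F s| <= A (u - s) + D ((u - p)^be - (s - p)^be).  The integral of the weight
    times this modulus has the explicit primitive below. *)

Definition modulus_primitive (p u th A D be s : R) : R :=
  A * (u - p) / th * Rpower (s - p) th - A / (th + 1) * Rpower (s - p) (th + 1)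
  + D * Rpower (u - p) be / th * Rpower (s - p) th - D / (be + th) * Rpower (s - p) (be + th).

Lemma modulus_primitive_derivative p u th A D be s : 0 < th -> 0 < be -> p < s ->
  derivable_pt_lim (modulus_primitive p u th A D be) s
    (Rpower (s - p) (th - 1) * (A * (u - s) + D * (Rpower (u - p) be - Rpower (s - p) be))).
Proof.
  intros Hth Hbe Hs. unfold modulus_primitive.
  assert (D1 : forall k e, derivable_pt_lim (fun s => k * Rpower (s - p) e) s
                 (k * (e * Rpower (s - p) (e - 1))))
    by (intros; apply derivable_pt_lim_scal, derivable_pt_lim_Rpower_shift; auto).
  eapply (eq_ind _ (derivable_pt_lim _ s)).
  - apply derivable_pt_lim_minus; [apply derivable_pt_lim_plus;
      [apply derivable_pt_lim_minus|]|]; apply D1.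
  - replace (th + 1 - 1) with ((th - 1) + 1) by ring.
    replace (be + th - 1) with ((th - 1) + be) by ring.
    rewrite Rpower_succ, Rpower_plus by lra. field. lra.
Qed.

Lemma modulus_primitive_nonneg p u th A D be c : 0 < th -> 0 < be -> 0 <= A -> 0 <= D ->
  p < c <= u -> 0 <= modulus_primitive p u th A D be c.
Proof.
  intros Hth Hbe HA HD Hc. unfold modulus_primitive.
  rewrite Rpower_succ by lra. replace (be + th) with (th + be) by ring. rewrite Rpower_plus.
  pose proof (Rpower_pos (c - p) th). pose proof (Rpower_pos (u - p) be).
  assert (Rpower (c - p) be <= Rpower (u - p) be) by (apply Rle_Rpower_l; lra).
  assert (0 <= (u - p) / th - (c - p) / (th + 1)).
  { apply Rle_trans with ((u - p) / (th + 1) - (c - p) / (th + 1)).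
    - unfold Rdiv. rewrite <- Rmult_minus_distr_r.
      apply Rmult_le_pos; [lra|left; apply Rinv_0_lt_compat; lra].
    - apply Rplus_le_compat_r. apply Rmult_le_compat_l; [lra|apply Rinv_le_contravar; lra]. }
  assert (0 <= Rpower (u - p) be / th - Rpower (c - p) be / (th + be)).
  { apply Rle_trans with (Rpower (u - p) be / (th + be) - Rpower (c - p) be / (th + be)).
    - unfold Rdiv. rewrite <- Rmult_minus_distr_r.
      apply Rmult_le_pos; [lra|left; apply Rinv_0_lt_compat; lra].
    - apply Rplus_le_compat_r. apply Rmult_le_compat_l; [lra|apply Rinv_le_contravar; lra]. }
  replace (A * (u - p) / th * Rpower (c - p) th - A / (th + 1) * (Rpower (c - p) th * (c - p))
           + D * Rpower (u - p) be / th * Rpower (c - p) th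
           - D / (th + be) * (Rpower (c - p) th * Rpower (c - p) be))
    with (Rpower (c - p) th * (A * ((u - p) / th - (c - p) / (th + 1))
          + D * (Rpower (u - p) be / th - Rpower (c - p) be / (th + be)))) by (field; lra).
  apply Rmult_le_pos; [lra|]. apply Rplus_le_le_0_compat; apply Rmult_le_pos; lra.
Qed.

Lemma modulus_primitive_at_end p u th A D be : 0 < th -> 0 < be -> p < u ->
  modulus_primitive p u th A D be u
  = A * Rpower (u - p) (th + 1) / (th * (th + 1))
    + D * Rpower (u - p) (be + th) * (be / (th * (be + th))).
Proof.
  intros Hth Hbe Hpu. unfold modulus_primitive.
  rewrite (Rpower_succ (u - p) th) by lra. rewrite Rpower_plus. field. lra.
Qed.

Lemma weighted_deviation_le F p u th A D be c :
  0 < th -> 0 < be -> p < c <= u ->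
  (forall s, p < s <= u -> continuity_pt F s) ->
  (forall s, p < s <= u ->
     Rabs (F u - F s) <= A * (u - s) + D * (Rpower (u - p) be - Rpower (s - p) be)) ->
  Rabs (F u * ((Rpower (u - p) th - Rpower (c - p) th) / th) - RInt (weighted p th F) c u)
  <= modulus_primitive p u th A D be u - modulus_primitive p u th A D be c.
Proof.
  intros Hth Hbe Hc HFc Hmod.
  assert (Hconst : forall k t, continuity_pt (fun _ : R => k) t)
    by (intros k t; apply continuity_pt_const; intros ? ?; auto).
  rewrite <- (RInt_weight p th c u) by lra. rewrite <- RInt_scal_minus.
  2, 3: apply ex_RInt_continuity; [lra|]; intros.
  2: apply continuity_pt_Rpower_shift; lra.
  2: apply continuity_pt_weighted; [|apply HFc]; lra.
  apply (RInt_abs_le_antiderivative _ _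
    (fun s => Rpower (s - p) (th - 1) * (A * (u - s) + D * (Rpower (u - p) be - Rpower (s - p) be))));
    [lra| | | |].
  - intros t Ht. apply continuity_pt_minus.
    + apply continuity_pt_mult; [apply Hconst|apply continuity_pt_Rpower_shift; lra].
    + apply continuity_pt_weighted; [lra|apply HFc; lra].
  - intros t Ht. apply modulus_primitive_derivative; lra.
  - intros t Ht. apply continuity_pt_mult; [apply continuity_pt_Rpower_shift; lra|].
    apply continuity_pt_plus; (apply continuity_pt_mult; [apply Hconst|]).
    + apply continuity_pt_minus; [apply Hconst|apply continuity_pt_id].
    + apply continuity_pt_minus; [apply Hconst|apply continuity_pt_Rpower_shift; lra].
  - intros t Ht. unfold weighted.
    replace (F u * Rpower (t - p) (th - 1) - Rpower (t - p) (th - 1) * F t)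
      with (Rpower (t - p) (th - 1) * (F u - F t)) by ring.
    rewrite Rabs_mult, (Rabs_pos_eq (Rpower _ _)) by (left; apply Rpower_pos).
    apply Rmult_le_compat_l; [left; apply Rpower_pos|]. apply Hmod; lra.
Qed.

(* Letting c -> p+ in [weighted_deviation_le]: the weighted mean of F over (p,u) differs from
   F u by at most the weighted mean of the modulus (the primitive vanishes at p). *)
Lemma weighted_mean_bound F p u th A D be l :
  p < u -> 0 < th -> 0 <= A -> 0 <= D -> 0 < be ->
  (forall s, p < s <= u -> continuity_pt F s) ->
  (forall s, p < s <= u ->
     Rabs (F u - F s) <= A * (u - s) + D * (Rpower (u - p) be - Rpower (s - p) be)) ->
  right_limit (fun c => RInt (weighted p th F) c u) p l ->
  Rabs (F u * (Rpower (u - p) th / th) - l) <= modulus_primitive p u th A D be u.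
Proof.
  intros Hpu Hth HA HD Hbe HFc Hmod Hl.
  set (Q := modulus_primitive p u th A D be).
  apply Rle_plus_epsilon. intros eps He.
  set (Fu := Rabs (F u)). assert (HFu : 0 <= Fu) by apply Rabs_pos.
  destruct (Hl (eps / 2) ltac:(lra)) as [d1 [Hd1 H1]].
  destruct (Rpower_small th (eps * th / (2 * (Fu + 1))) Hth) as [d2 [Hd2 H2]];
    [apply Rdiv_lt_0_compat; [apply Rmult_lt_0_compat|]; lra|].
  set (c := p + Rmin (Rmin d1 d2) (u - p) / 2).
  assert (0 < Rmin (Rmin d1 d2) (u - p)) by (apply Rmin_pos; [apply Rmin_pos|]; lra).
  pose proof (Rmin_l (Rmin d1 d2) (u - p)). pose proof (Rmin_r (Rmin d1 d2) (u - p)).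
  pose proof (Rmin_l d1 d2). pose proof (Rmin_r d1 d2).
  assert (Hc : p < c <= u) by (unfold c; lra).
  pose proof (weighted_deviation_le F p u th A D be c Hth Hbe Hc HFc Hmod) as K1.
  pose proof (modulus_primitive_nonneg p u th A D be c Hth Hbe HA HD Hc) as K2.
  assert (K3 : Rabs (RInt (weighted p th F) c u - l) < eps / 2) by (apply H1; unfold c; lra).
  assert (K4 : Rpower (c - p) th / th < eps / (2 * (Fu + 1))).
  { apply (Rmult_lt_reg_r th); [lra|]. replace (Rpower (c - p) th / th * th) with (Rpower (c - p) th)
      by (field; lra). replace (eps / (2 * (Fu + 1)) * th) with (eps * th / (2 * (Fu + 1))) by (field; lra).
    apply H2; unfold c; lra. }
  assert (K5 : Rabs (F u * (Rpower (c - p) th / th)) <= eps / 2).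
  { rewrite Rabs_mult, (Rabs_pos_eq (_ / th)) by (apply Rdiv_le_0_compat; [left; apply Rpower_pos|lra]).
    fold Fu. assert (E : (Fu + 1) * (eps / (2 * (Fu + 1))) = eps / 2) by (field; lra).
    pose proof (Rdiv_le_0_compat (Rpower (c - p) th) th ltac:(left; apply Rpower_pos) Hth).
    nra. }
  replace (F u * (Rpower (u - p) th / th) - l) with
    (F u * (Rpower (c - p) th / th)
     + (F u * ((Rpower (u - p) th - Rpower (c - p) th) / th) - RInt (weighted p th F) c u)
     + (RInt (weighted p th F) c u - l)) by (field; lra).
  eapply Rle_trans; [apply Rabs_triang|]. eapply Rle_trans; [apply Rplus_le_compat_r, Rabs_triang|].
  fold Q in K1, K2. lra.
Qed.

Lemma power_modulus_of_derivative_bound (F F' : R -> R) p u al A C :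
  p < u -> 0 <= al ->
  (forall r, p < r <= u -> derivable_pt_lim F r (F' r)) ->
  (forall r, p < r <= u -> Rabs (F' r) <= A + C * Rpower ((r - p) / (u - p)) al) ->
  forall s, p < s <= u ->
  Rabs (F u - F s) <= A * (u - s) + C * Rpower (u - p) (- al) / (al + 1)
                                   * (Rpower (u - p) (al + 1) - Rpower (s - p) (al + 1)).
Proof.
  intros Hpu Hal HF' Hbd s Hs. set (D := C * Rpower (u - p) (- al) / (al + 1)).
  replace (A * (u - s) + D * (Rpower (u - p) (al + 1) - Rpower (s - p) (al + 1)))
    with ((A * u + D * Rpower (u - p) (al + 1)) - (A * s + D * Rpower (s - p) (al + 1))) by ring.
  apply (diff_le_of_derivative_bound F F' (fun r => A * r + D * Rpower (r - p) (al + 1))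
           (fun r => A + D * ((al + 1) * Rpower (r - p) (al + 1 - 1)))); [lra| | |].
  - intros r Hr. apply HF'; lra.
  - intros r Hr. apply derivable_pt_lim_plus; [apply derivable_pt_lim_linear|].
    apply derivable_pt_lim_scal, derivable_pt_lim_Rpower_shift; lra.
  - intros r Hr. eapply Rle_trans; [apply Hbd; lra|]. right.
    replace (al + 1 - 1) with al by ring. rewrite Rpower_div by lra. unfold D. field. lra.
Qed.

Lemma fractional_mean_estimate (F F' : R -> R) p u th al A C :
  p < u -> 0 < th -> 0 <= al -> 0 <= A -> 0 <= C ->
  (forall r, p < r <= u -> derivable_pt_lim F r (F' r)) ->
  (forall r, p < r <= u -> Rabs (F' r) <= A + C * Rpower ((r - p) / (u - p)) al) ->
  exists L, is_improper_int (weighted p th F) p u L /\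
    Rabs (F u * (Rpower (u - p) th / th) - L)
    <= Rpower (u - p) (th + 1) / th * (A / (th + 1) + C / (al + th + 1)).
Proof.
  intros Hpu Hth Hal HA HC HF' Hbd.
  pose proof (power_modulus_of_derivative_bound F F' p u al A C Hpu Hal HF' Hbd) as Hmod.
  set (D := C * Rpower (u - p) (- al) / (al + 1)) in Hmod.
  assert (HD : 0 <= D).
  { apply Rdiv_le_0_compat; [apply Rmult_le_pos; [|left; apply Rpower_pos]|]; lra. }
  assert (HFc : forall s, p < s <= u -> continuity_pt F s).
  { intros s Hs. apply derivable_continuous_pt. exists (F' s). apply HF'; auto. }
  assert (HFB : forall s, p < s <= u ->
    Rabs (F s) <= Rabs (F u) + A * (u - p) + D * Rpower (u - p) (al + 1)).
  { intros s Hs. pose proof (Hmod s Hs). pose proof (Rpower_pos (s - p) (al + 1)).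
    assert (A * (u - s) <= A * (u - p)) by (apply Rmult_le_compat_l; lra).
    assert (D * (Rpower (u - p) (al + 1) - Rpower (s - p) (al + 1)) <= D * Rpower (u - p) (al + 1))
      by (apply Rmult_le_compat_l; lra).
    pose proof (Rabs_triang_inv (F s) (F u)) as Htri. rewrite Rabs_minus_sym in Htri. lra. }
  destruct (weighted_integral_right_limit F p u th _ Hpu Hth HFc HFB) as [l Hl].
  exists l. split.
  - apply is_improper_int_of_right_limit; auto.
    intros s Hs. apply continuity_pt_weighted; [lra|auto].
  - eapply Rle_trans; [apply (weighted_mean_bound F p u th A D (al + 1) l); auto; lra|].
    right. rewrite modulus_primitive_at_end by lra. unfold D.
    replace (al + 1 + th) with (al + (th + 1)) by ring. rewrite (Rpower_plus al (th + 1)), Rpower_Ropp.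
    pose proof (Rpower_pos (u - p) al). field. lra.
Qed.

(** Euler's Gamma function: existence, positivity and Gamma (th + 1) = th Gamma th. *)

Definition Gamma_integrand (th t : R) : R := Rpower t (th - 1) * exp (- t).

Lemma continuity_pt_Gamma_integrand th t : 0 < t -> continuity_pt (Gamma_integrand th) t.
Proof.
  intro Ht. apply continuity_pt_mult.
  - apply derivable_continuous_pt. exists ((th - 1) * Rpower t (th - 1 - 1)).
    apply derivable_pt_lim_power; auto.
  - apply (continuity_pt_comp Ropp exp t); [apply continuity_pt_opp, continuity_pt_id|].
    apply derivable_continuous_pt, derivable_pt_exp.
Qed.

Lemma ex_RInt_Gamma_integrand th a b : 0 < a <= b -> ex_RInt (Gamma_integrand th) a b.
Proof.
  intro Hab. apply ex_RInt_continuity; [lra|].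
  intros; apply continuity_pt_Gamma_integrand; lra.
Qed.

Lemma derivable_pt_lim_exp_neg t : derivable_pt_lim (fun s => exp (- s)) t (- exp (- t)).
Proof. apply derivable_pt_lim_reflect, derivable_pt_lim_exp. Qed.

Lemma exp_neg_lt_inv y : 0 < y -> exp (- y) < / y.
Proof.
  intro Hy. rewrite exp_Ropp. apply Rinv_lt_contravar; [apply Rmult_lt_0_compat; auto; apply exp_pos|].
  pose proof (exp_ineq1_le y). lra.
Qed.

Lemma exp_le_1 t : 0 <= t -> exp (- t) <= 1.
Proof. intro Ht. rewrite <- exp_0. destruct (Req_dec t 0) as [->|]; [rewrite Ropp_0; lra|].
  left; apply exp_increasing; lra. Qed.

Lemma Rpower_exp_decay th : 0 < th ->
  exists K, 0 < K /\ forall t, 0 < t -> Rpower t th * exp (- t) <= K * exp (- t / 2).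
Proof.
  intro Hth. exists (exp (th * (ln (2 * th) - 1))). split; [apply exp_pos|].
  intros t Ht. unfold Rpower. rewrite <- !exp_plus.
  assert (E : ln t = ln (t / (2 * th)) + ln (2 * th)).
  { rewrite <- ln_mult; [f_equal; field; lra| |]; [apply Rdiv_lt_0_compat|]; lra. }
  assert (Hln : ln (t / (2 * th)) <= t / (2 * th) - 1).
  { pose proof (exp_ineq1_le (ln (t / (2 * th)))) as H1.
    rewrite exp_ln in H1 by (apply Rdiv_lt_0_compat; lra). lra. }
  assert (th * ln (t / (2 * th)) <= t / 2 - th).
  { replace (t / 2 - th) with (th * (t / (2 * th) - 1)) by (field; lra).
    apply Rmult_le_compat_l; lra. }
  rewrite E. destruct (Rle_lt_or_eq_dec (th * (ln (t / (2 * th)) + ln (2 * th)) + - t)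
                         (th * (ln (2 * th) - 1) + - t / 2)) as [Hlt| ->]; [nra| |lra].
  left; apply exp_increasing; auto.
Qed.

Lemma Gamma_integrand_tail th : 0 < th -> forall eps, 0 < eps ->
  exists N, 1 <= N /\ forall d1 d2, N < d1 <= d2 -> RInt (Gamma_integrand th) d1 d2 < eps.
Proof.
  intros Hth eps He. destruct (Rpower_exp_decay th Hth) as [K [HK Hdec]].
  exists (8 * K / eps + 1). split; [assert (0 <= 8 * K / eps) by (apply Rdiv_le_0_compat; lra); lra|].
  intros d1 d2 Hd.
  assert (Hd1 : 0 < 8 * K / eps < d1) by (split; [apply Rdiv_lt_0_compat|]; lra).
  apply Rle_lt_trans with (Rabs (RInt (Gamma_integrand th) d1 d2)); [apply Rle_abs|].
  eapply Rle_lt_trans.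
  { apply (RInt_abs_le_antiderivative _ (fun s => - (2 * K) * exp (- / 2 * s))
             (fun s => K * exp (- / 2 * s))); [lra| | | |].
    - intros; apply continuity_pt_Gamma_integrand; lra.
    - intros t Ht. replace (K * exp (- / 2 * t)) with (- (2 * K) * (exp (- / 2 * t) * - / 2)) by field.
      apply derivable_pt_lim_scal.
      apply (derivable_pt_lim_comp (fun s => - / 2 * s) exp t (- / 2) (exp (- / 2 * t)));
        [|apply derivable_pt_lim_exp].
      apply derivable_pt_lim_linear.
    - intros t Ht. apply continuity_pt_mult; [apply continuity_pt_const; intros ? ?; auto|].
      apply (continuity_pt_comp (fun s => - / 2 * s) exp t);
        [|apply derivable_continuous_pt, derivable_pt_exp].
      apply continuity_pt_mult; [apply continuity_pt_const; intros ? ?; auto|apply continuity_pt_id].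
    - intros t Ht. unfold Gamma_integrand.
      rewrite Rabs_mult, !Rabs_pos_eq by (left; first [apply Rpower_pos|apply exp_pos]).
      replace (- / 2 * t) with (- t / 2) by field.
      eapply Rle_trans; [|apply Hdec; lra].
      apply Rmult_le_compat_r; [left; apply exp_pos|]. apply Rle_Rpower; lra. }
  pose proof (exp_pos (- / 2 * d2)).
  pose proof (exp_neg_lt_inv (d1 / 2) ltac:(lra)) as Hinv.
  replace (- (d1 / 2)) with (- / 2 * d1) in Hinv by field.
  assert (2 * K * / (d1 / 2) < eps).
  { replace (2 * K * / (d1 / 2)) with (4 * K / d1) by (field; lra).
    apply (Rmult_lt_reg_r d1); [lra|]. replace (4 * K / d1 * d1) with (4 * K) by (field; lra).
    replace (8 * K / eps) with (8 * K * / eps) in Hd1 by reflexivity.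
    assert (8 * K < eps * d1).
    { apply (Rmult_lt_reg_r (/ eps)); [apply Rinv_0_lt_compat; lra|].
      replace (eps * d1 * / eps) with d1 by (field; lra). lra. }
    lra. }
  nra.
Qed.

(* The boundary term of the integration by parts vanishes at +oo. *)
Lemma Rpower_exp_vanishes_at_infinity th : 0 < th -> forall eps, 0 < eps ->
  exists N, forall d, N < d -> Rpower d th * exp (- d) < eps.
Proof.
  intros Hth eps He. destruct (Rpower_exp_decay th Hth) as [K [HK Hdec]].
  exists (2 * K / eps + 1). intros d Hd.
  assert (Hd0 : 0 < 2 * K / eps) by (apply Rdiv_lt_0_compat; lra).
  eapply Rle_lt_trans; [apply Hdec; lra|].
  pose proof (exp_neg_lt_inv (d / 2) ltac:(lra)) as Hinv.
  replace (- (d / 2)) with (- d / 2) in Hinv by field.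
  apply Rlt_le_trans with (K * / (d / 2)); [apply Rmult_lt_compat_l; auto|].
  replace (K * / (d / 2)) with (2 * K / d) by (field; lra).
  apply (Rmult_le_reg_r d); [lra|]. replace (2 * K / d * d) with (2 * K) by (field; lra).
  replace (2 * K) with (eps * (2 * K / eps)) by (field; lra).
  apply Rmult_le_compat_l; lra.
Qed.

Lemma Gamma_unique th G1 G2 : is_Gamma th G1 -> is_Gamma th G2 -> G1 = G2.
Proof.
  intros H1 H2. apply cond_eq. intros eps He.
  destruct (H1 (eps / 2) ltac:(lra)) as [d1 [Hd1 K1]].
  destruct (H2 (eps / 2) ltac:(lra)) as [d2 [Hd2 K2]].
  set (dl := Rmin d1 d2). assert (0 < dl) by (apply Rmin_pos; auto).
  assert (dl <= d1 /\ dl <= d2) as [] by (split; [apply Rmin_l|apply Rmin_r]).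
  assert (/ d1 <= / dl) by (apply Rinv_le_contravar; auto).
  assert (/ d2 <= / dl) by (apply Rinv_le_contravar; auto).
  destruct (K1 (dl / 2) (/ dl + 1)) as [v1 [V1 E1]]; [lra|lra|].
  destruct (K2 (dl / 2) (/ dl + 1)) as [v2 [V2 E2]]; [lra|lra|].
  apply RInt_val_RInt in V1. apply RInt_val_RInt in V2. rewrite V1 in V2. subst v2.
  replace (G1 - G2) with ((v1 - G2) - (v1 - G1)) by ring.
  eapply Rle_lt_trans; [apply Rabs_triang|]. rewrite Rabs_Ropp. lra.
Qed.

Lemma Gamma_integral_at_infinity th : 0 < th ->
  exists l, limit_at_infinity (fun d => RInt (Gamma_integrand th) 1 d) l.
Proof.
  intro Hth.
  apply limit_at_infinity_of_cauchy.
  intros eps He. destruct (Gamma_integrand_tail th Hth eps He) as [N [HN Htail]].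
  exists N. assert (K : forall d1 d2, N < d1 <= d2 ->
    Rabs (RInt (Gamma_integrand th) 1 d1 - RInt (Gamma_integrand th) 1 d2) < eps).
  { intros d1 d2 Hd.
    rewrite (RInt_Chasles_R _ 1 d1 d2) by (apply ex_RInt_Gamma_integrand; lra).
    replace (RInt (Gamma_integrand th) 1 d1 - (RInt (Gamma_integrand th) 1 d1
             + RInt (Gamma_integrand th) d1 d2)) with (- RInt (Gamma_integrand th) d1 d2) by ring.
    rewrite Rabs_Ropp, Rabs_pos_eq; [apply Htail; lra|].
    apply RInt_ge_0; [lra|apply ex_RInt_Gamma_integrand; lra|].
    intros t Ht. left. apply Rmult_lt_0_compat; [apply Rpower_pos|apply exp_pos]. }
  intros d1 d2 H1 H2. destruct (Rle_or_lt d1 d2); [apply K; lra|].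
  rewrite Rabs_minus_sym. apply K; lra.
Qed.

(* The integral over (0,1] is a weighted integral of e^(-t); the one over [1,oo) has a
   negligible tail.  Both limits exist, and their sum is Gamma th. *)
Lemma Gamma_exists th : 0 < th -> exists G, is_Gamma th G.
Proof.
  intro Hth.
  assert (shift : forall c, RInt (weighted 0 th (fun t => exp (- t))) c 1
                            = RInt (Gamma_integrand th) c 1 :> R).
  { intro c. apply RInt_ext. intros t _. unfold weighted, Gamma_integrand. now rewrite Rminus_0_r. }
  destruct (weighted_integral_right_limit (fun t => exp (- t)) 0 1 th 1) as [l1 Hl1]; try lra.
  { intros s Hs. apply (continuity_pt_comp Ropp exp s); [apply continuity_pt_opp, continuity_pt_id|].
    apply derivable_continuous_pt, derivable_pt_exp. }
  { intros s Hs. rewrite Rabs_pos_eq by (left; apply exp_pos). apply exp_le_1; lra. }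
  destruct (Gamma_integral_at_infinity th Hth) as [l2 Hl2].
  exists (l1 + l2). intros eps He.
  destruct (Hl1 (eps / 2) ltac:(lra)) as [d1 [Hd1 K1]].
  destruct (Hl2 (eps / 2) ltac:(lra)) as [N K2].
  set (dl := Rmin (Rmin d1 1) (/ (Rabs N + 1))).
  assert (0 < / (Rabs N + 1)) by (apply Rinv_0_lt_compat; pose proof (Rabs_pos N); lra).
  assert (0 < dl) by (apply Rmin_pos; [apply Rmin_pos|]; lra).
  assert (dl <= Rmin d1 1 /\ dl <= / (Rabs N + 1)) as [Hdl1 Hdl2] by (split; [apply Rmin_l|apply Rmin_r]).
  pose proof (Rmin_l d1 1). pose proof (Rmin_r d1 1).
  exists dl. split; auto. intros c d Hc Hd.
  assert (Hinv : / / (Rabs N + 1) <= / dl) by (apply Rinv_le_contravar; auto).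
  rewrite Rinv_inv in Hinv. pose proof (Rle_abs N). pose proof (Rabs_pos N).
  exists (RInt (Gamma_integrand th) c d). split.
  - apply RInt_val_continuity; [lra|]. intros; apply continuity_pt_Gamma_integrand; lra.
  - rewrite (RInt_Chasles_R _ c 1 d) by (apply ex_RInt_Gamma_integrand; lra).
    rewrite <- shift.
    assert (Rabs (RInt (weighted 0 th (fun t => exp (- t))) c 1 - l1) < eps / 2)
      by (apply K1; lra).
    assert (Rabs (RInt (Gamma_integrand th) 1 d - l2) < eps / 2) by (apply K2; lra).
    replace (_ + _ - (l1 + l2)) with
      ((RInt (weighted 0 th (fun t => exp (- t))) c 1 - l1) + (RInt (Gamma_integrand th) 1 d - l2))
      by ring.
    eapply Rle_lt_trans; [apply Rabs_triang|]. lra.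
Qed.

(* Gamma th dominates the positive integral of its integrand over [1,2]. *)
Lemma is_Gamma_pos th G : is_Gamma th G -> 0 < G.
Proof.
  intro HG. set (I12 := RInt (Gamma_integrand th) 1 2).
  assert (HI : 0 < I12).
  { apply RInt_gt_0; [lra| |].
    - intros t Ht. apply Rmult_lt_0_compat; [apply Rpower_pos|apply exp_pos].
    - intros t Ht. apply (proj1 (continuity_pt_filterlim _ t)), continuity_pt_Gamma_integrand; lra. }
  destruct (HG (I12 / 2) ltac:(lra)) as [del [Hdel K]].
  set (c := Rmin del 1 / 2). set (d := / del + 2).
  assert (0 < Rmin del 1) by (apply Rmin_pos; lra).
  pose proof (Rmin_l del 1). pose proof (Rmin_r del 1).
  assert (0 < / del) by (apply Rinv_0_lt_compat; auto).
  destruct (K c d) as [v [V Hv]]; [unfold c; lra|unfold d; lra|].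
  apply RInt_val_RInt in V. fold (Gamma_integrand th) in V.
  assert (Hge : I12 <= v).
  { rewrite <- V. unfold I12.
    rewrite (RInt_Chasles_R _ c 1 d), (RInt_Chasles_R _ 1 2 d) by (apply ex_RInt_Gamma_integrand; unfold c, d; lra).
    assert (Hnonneg : forall a b, 0 < a <= b -> 0 <= RInt (Gamma_integrand th) a b).
    { intros a b Hab. apply RInt_ge_0; [lra|apply ex_RInt_Gamma_integrand; lra|].
      intros t Ht. left. apply Rmult_lt_0_compat; [apply Rpower_pos|apply exp_pos]. }
    assert (0 <= RInt (Gamma_integrand th) c 1) by (apply Hnonneg; unfold c; lra).
    assert (0 <= RInt (Gamma_integrand th) 2 d) by (apply Hnonneg; unfold d; lra).
    lra. }
  apply Rabs_def2 in Hv. lra.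
Qed.

(* Integration by parts, with boundary term t^th e^(-t). *)
Lemma RInt_Gamma_integrand_succ th c d : 0 < c <= d ->
  RInt (Gamma_integrand (th + 1)) c d
  = th * RInt (Gamma_integrand th) c d - (Rpower d th * exp (- d) - Rpower c th * exp (- c)) :> R.
Proof.
  intro Hcd.
  assert (Hcont : forall t, c <= t <= d ->
    continuity_pt (fun t => th * Gamma_integrand th t - Gamma_integrand (th + 1) t) t).
  { intros t Ht. apply continuity_pt_minus; [|apply continuity_pt_Gamma_integrand; lra].
    apply continuity_pt_mult; [apply continuity_pt_const; intros ? ?; auto|].
    apply continuity_pt_Gamma_integrand; lra. }
  assert (Esplit : forall t, Gamma_integrand (th + 1) t
    = th * Gamma_integrand th t - (th * Gamma_integrand th t - Gamma_integrand (th + 1) t))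
    by (intro; ring).
  rewrite (RInt_ext _ _ c d (fun t _ => Esplit t)).
  rewrite RInt_scal_minus;
    [|apply ex_RInt_Gamma_integrand; lra|apply ex_RInt_continuity; [lra|exact Hcont]].
  rewrite (RInt_antiderivative (fun t => Rpower t th * exp (- t))
    (fun t => th * Gamma_integrand th t - Gamma_integrand (th + 1) t) c d);
    [reflexivity|lra| |exact Hcont].
  intros t Ht. unfold Gamma_integrand.
  replace (th * (Rpower t (th - 1) * exp (- t)) - Rpower t (th + 1 - 1) * exp (- t))
    with (th * Rpower t (th - 1) * exp (- t) + Rpower t th * - exp (- t))
    by (replace (th + 1 - 1) with th by ring; ring).
  apply (derivable_pt_lim_mult (fun t => Rpower t th) (fun t => exp (- t))).
  - apply derivable_pt_lim_power; lra.
  - apply derivable_pt_lim_exp_neg.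
Qed.

(* The functional equation at the level of [is_Gamma]: integrate by parts on [c,d] and let
   the boundary terms vanish as c -> 0+ and d -> +oo. *)
Lemma is_Gamma_succ th G : 0 < th -> is_Gamma th G -> is_Gamma (th + 1) (th * G).
Proof.
  intros Hth HG eps He.
  destruct (HG (eps / (3 * th)) ltac:(apply Rdiv_lt_0_compat; lra)) as [dG [HdG KG]].
  destruct (Rpower_small th (eps / 3) Hth ltac:(lra)) as [d0 [Hd0 Hs0]].
  destruct (Rpower_exp_vanishes_at_infinity th Hth (eps / 3) ltac:(lra)) as [N HN].
  set (dl := Rmin (Rmin dG d0) (/ (Rabs N + 1))).
  assert (HN1 : 0 < / (Rabs N + 1)) by (apply Rinv_0_lt_compat; pose proof (Rabs_pos N); lra).
  assert (0 < dl) by (apply Rmin_pos; [apply Rmin_pos|]; lra).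
  assert (dl <= Rmin dG d0 /\ dl <= / (Rabs N + 1)) as [Hdl1 Hdl2] by (split; [apply Rmin_l|apply Rmin_r]).
  pose proof (Rmin_l dG d0). pose proof (Rmin_r dG d0).
  exists dl. split; auto. intros c d Hc Hd.
  assert (Hinv : / / (Rabs N + 1) <= / dl) by (apply Rinv_le_contravar; auto).
  rewrite Rinv_inv in Hinv. pose proof (Rle_abs N). pose proof (Rabs_pos N).
  assert (/ (Rabs N + 1) <= 1) by (rewrite <- Rinv_1; apply Rinv_le_contravar; lra).
  assert (/ dG <= / dl) by (apply Rinv_le_contravar; lra).
  destruct (KG c d ltac:(lra) ltac:(lra)) as [vG [VG EG]].
  apply RInt_val_RInt in VG. fold (Gamma_integrand th) in VG.
  exists (RInt (Gamma_integrand (th + 1)) c d). split.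
  { apply RInt_val_continuity; [lra|]. intros; apply continuity_pt_Gamma_integrand; lra. }
  rewrite RInt_Gamma_integrand_succ, VG by lra.
  assert (Hd_small : 0 < Rpower d th * exp (- d) < eps / 3).
  { split; [apply Rmult_lt_0_compat; [apply Rpower_pos|apply exp_pos]|apply HN; lra]. }
  assert (Hc_small : 0 < Rpower c th * exp (- c) < eps / 3).
  { split; [apply Rmult_lt_0_compat; [apply Rpower_pos|apply exp_pos]|].
    pose proof (Rpower_pos c th). pose proof (exp_le_1 c ltac:(lra)).
    assert (Rpower c th < eps / 3) by (apply Hs0; lra). nra. }
  assert (th * Rabs (vG - G) < eps / 3).
  { replace (eps / 3) with (th * (eps / (3 * th))) by (field; lra). apply Rmult_lt_compat_l; auto. }
  replace (th * vG - (Rpower d th * exp (- d) - Rpower c th * exp (- c)) - th * G)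
    with (th * (vG - G) - (Rpower d th * exp (- d) - Rpower c th * exp (- c))) by ring.
  eapply Rle_lt_trans; [apply Rabs_triang|]. rewrite Rabs_Ropp, Rabs_mult, (Rabs_pos_eq th) by lra.
  assert (Rabs (Rpower d th * exp (- d) - Rpower c th * exp (- c)) < eps / 3)
    by (apply Rabs_def1; lra).
  lra.
Qed.

Lemma Gamma_spec th : 0 < th -> is_Gamma th (Gamma th).
Proof.
  intro Hth. destruct (Gamma_exists th Hth) as [G HG].
  unfold Gamma. apply epsilon_spec. exists G; auto.
Qed.

Lemma Gamma_pos_succ th : 0 < th -> 0 < Gamma th /\ Gamma (th + 1) = th * Gamma th.
Proof.
  intro Hth. split; [apply (is_Gamma_pos th), Gamma_spec; auto|].
  apply (Gamma_unique (th + 1)); [apply Gamma_spec; lra|].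
  apply is_Gamma_succ, Gamma_spec; auto.
Qed.

(** Bounds for |f'| from the (alpha,m)-convexity of |f'|^q. *)

Lemma convex_power_bound (h : R -> R) alpha m lo hi q M X Y t :
  0 < m <= 1 -> 0 <= alpha -> 1 <= q ->
  alpha_m_convex alpha m lo hi (fun u => rpow (h u) q) ->
  (forall u, lo <= u <= hi -> 0 <= h u <= M) ->
  lo <= X <= hi -> lo <= Y <= hi -> 0 < t <= 1 -> lo <= t * X + m * (1 - t) * Y <= hi ->
  h (t * X + m * (1 - t) * Y) <= M * Rpower (m + (1 - m) * Rpower t alpha) (1 / q).
Proof.
  intros Hm Hal Hq Hconv HhM HX HY Ht Hr.
  set (r := t * X + m * (1 - t) * Y) in *.
  pose proof (Hconv X Y t HX HY ltac:(lra) Hr) as Hc. simpl in Hc. fold r in Hc.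
  rewrite (rpow_pos_eq t alpha) in Hc by lra.
  assert (Hta : 0 <= Rpower t alpha <= 1).
  { split; [left; apply Rpower_pos|]. rewrite <- (rpow_pos_eq t alpha) by lra. apply rpow_le_1; lra. }
  set (psi := m + (1 - m) * Rpower t alpha).
  assert (Hpsi : 0 < psi) by (unfold psi; nra).
  assert (Hqr : rpow (h r) q <= rpow M q * psi).
  { assert (GX : rpow (h X) q <= rpow M q) by (apply rpow_le_compat; [lra|apply HhM; lra]).
    assert (GY : rpow (h Y) q <= rpow M q) by (apply rpow_le_compat; [lra|apply HhM; lra]).
    assert (Rpower t alpha * rpow (h X) q <= Rpower t alpha * rpow M q)
      by (apply Rmult_le_compat_l; lra).
    assert (m * (1 - Rpower t alpha) * rpow (h Y) q <= m * (1 - Rpower t alpha) * rpow M q)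
      by (apply Rmult_le_compat_l; [apply Rmult_le_pos|]; lra).
    replace (rpow M q * psi) with (Rpower t alpha * rpow M q + m * (1 - Rpower t alpha) * rpow M q)
      by (unfold psi; ring).
    lra. }
  pose proof (HhM r Hr) as [Hr0 HrM].
  destruct (Req_dec (h r) 0) as [-> | Hr1].
  { apply Rmult_le_pos; [lra|left; apply Rpower_pos]. }
  rewrite !rpow_pos_eq in Hqr by lra.
  assert (Eq1 : forall z, 0 < z -> Rpower (Rpower z q) (1 / q) = z).
  { intros z Hz. rewrite Rpower_mult. replace (q * (1 / q)) with 1 by (field; lra). apply Rpower_1; auto. }
  rewrite <- (Eq1 (h r)) by lra. rewrite <- (Eq1 M) by lra.
  rewrite Rpower_mult_distr by (try apply Rpower_pos; lra).
  apply Rle_Rpower_l; [apply Rdiv_le_0_compat; lra|split; [apply Rpower_pos|auto]].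
Qed.

Lemma interior_between (I : R -> Prop) lo hi r : nonneg_interval I ->
  interior I lo -> interior I hi -> lo <= r <= hi -> interior I r.
Proof.
  intros [Hc _] [d1 H1] [d2 H2] Hr.
  exists (mkposreal _ (Rmin_pos _ _ (cond_pos d1) (cond_pos d2))).
  intros y Hy. unfold disc in *. simpl in Hy.
  pose proof (Rmin_l d1 d2). pose proof (Rmin_r d1 d2).
  pose proof (cond_pos d1). pose proof (cond_pos d2).
  assert (Ilo : I lo) by (apply H1; unfold disc; rewrite Rminus_diag, Rabs_R0; auto).
  assert (Ihi : I hi) by (apply H2; unfold disc; rewrite Rminus_diag, Rabs_R0; auto).
  destruct (Rlt_or_le y lo).
  - apply H1. unfold disc. apply Rabs_def1; split_Rabs; lra.
  - destruct (Rle_or_lt y hi).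
    + apply (Hc lo y hi); auto.
    + apply H2. unfold disc. apply Rabs_def1; split_Rabs; lra.
Qed.

(* Passing from the weighted mean to the normalisation of the theorem, where the integral is
   divided by Gamma th and the mean multiplied by Gamma (th + 1) = th Gamma th. *)
Lemma normalised_mean_bound y m th a b Fu L G E :
  0 < y -> 0 < m -> 0 < th -> a < b -> 0 < G ->
  Rabs (Fu * (Rpower (m * y) th / th) - L) <= Rpower (m * y) (th + 1) / th * E ->
  Rabs (Rpower y th / (b - a) * Fu - th * G / (Rpower m th * (b - a)) * (/ G * L))
  <= m * E * (Rpower y (th + 1) / (b - a)).
Proof.
  intros Hy Hm Hth Hab HG H.
  rewrite <- Rpower_mult_distr in H by lra.
  rewrite (Rpower_succ (m * y)), <- Rpower_mult_distr in H by (try apply Rmult_lt_0_compat; lra).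
  rewrite Rpower_succ by lra.
  pose proof (Rpower_pos m th). pose proof (Rpower_pos y th).
  set (k := th / (Rpower m th * (b - a))).
  assert (Hk : 0 < k) by (apply Rdiv_lt_0_compat; [|apply Rmult_lt_0_compat]; lra).
  replace (Rpower y th / (b - a) * Fu - th * G / (Rpower m th * (b - a)) * (/ G * L))
    with (k * (Fu * (Rpower m th * Rpower y th / th) - L)) by (unfold k; field; repeat split; lra).
  rewrite Rabs_mult, Rabs_pos_eq by lra.
  eapply Rle_trans; [apply Rmult_le_compat_l; [lra|exact H]|].
  right. unfold k. field. repeat split; lra.
Qed.

(** Both halves of the theorem are instances of
    [fractional_mean_estimate]: on the left directly, on the right after the reflection
    s |-> -s.  The convexity bound is linearised by the tangent of y |-> y^(1/q) at K, the
    mean of m + (1 - m) t^alpha for the density (th + 1) t^th on [0,1] that the weighted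
    integration produces; this is a Jensen-type step and returns exactly K^(1/q). *)

Section OneSidedEstimates.

Variables (f f' : R -> R) (m alpha a b q M x th : R).
Hypotheses (Hm : 0 < m <= 1) (Hal : 0 <= alpha <= 1) (Hq : 1 <= q) (Hth : 0 < th)
  (Hab : a < b) (Ha : 0 <= a) (Hx : a <= x <= b)
  (Hder : forall r, m * a <= r <= b -> derivable_pt_lim f r (f' r))
  (Hconv : alpha_m_convex alpha m (m * a) b (fun u => rpow (Rabs (f' u)) q))
  (HM : forall u, m * a <= u <= b -> Rabs (f' u) <= M).

(* K is the averaged value of m + (1 - m) t^alpha; A + C t^alpha is the tangent bound. *)
Let K := (alpha * m + th + 1) / (alpha + th + 1).
Let A := M * (Rpower K (1 / q) + 1 / q * Rpower K (1 / q - 1) * (m - K)).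
Let C := M * (1 / q * Rpower K (1 / q - 1) * (1 - m)).

(* Signs of the constants; m <= K places the tangent point inside the range of the bound. *)
Lemma mean_constant_bounds : m <= K /\ 0 <= M /\ 0 <= A /\ 0 <= C.
Proof.
  assert (HmK : m <= K).
  { unfold K. apply (Rmult_le_reg_r (alpha + th + 1)); [lra|].
    replace ((alpha * m + th + 1) / (alpha + th + 1) * (alpha + th + 1)) with (alpha * m + th + 1)
      by (field; lra). nra. }
  assert (HM0 : 0 <= M).
  { pose proof (HM (m * a) ltac:(nra)). pose proof (Rabs_pos (f' (m * a))). lra. }
  assert (HK : 0 < K) by lra.
  assert (Hq1 : 0 < 1 / q) by (apply Rdiv_lt_0_compat; lra).
  pose proof (Rpower_pos K (1 / q - 1)).
  repeat split; auto.
  - unfold A. apply Rmult_le_pos; auto. rewrite (Rpower_pred K (1 / q)) by auto.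
    replace (Rpower K (1 / q) + 1 / q * (Rpower K (1 / q) / K) * (m - K))
      with (Rpower K (1 / q) / K * (K * (1 - 1 / q) + m * (1 / q))) by (field; lra).
    apply Rmult_le_pos; [apply Rdiv_le_0_compat; [left; apply Rpower_pos|lra]|].
    assert (1 / q <= 1) by (apply (Rmult_le_reg_r q); [lra|]; field_simplify; lra). nra.
  - unfold C. apply Rmult_le_pos; auto. apply Rmult_le_pos; [apply Rmult_le_pos|]; lra.
Qed.

Lemma mean_constant : A / (th + 1) + C / (alpha + th + 1) = M * Rpower K (1 / q) / (th + 1).
Proof. unfold A, C, K. field. lra. Qed.

Lemma derivative_bound X Y t : m * a <= X <= b -> m * a <= Y <= b -> 0 < t <= 1 ->
  m * a <= t * X + m * (1 - t) * Y <= b ->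
  Rabs (f' (t * X + m * (1 - t) * Y)) <= A + C * Rpower t alpha.
Proof.
  intros HX HY Ht Hr. destruct mean_constant_bounds as (HmK & HM0 & _).
  eapply Rle_trans.
  { apply (convex_power_bound (fun u => Rabs (f' u)) alpha m (m * a) b q M); auto; try lra.
    intros u Hu. split; [apply Rabs_pos|auto]. }
  assert (Hta : 0 < Rpower t alpha) by apply Rpower_pos.
  assert (Hpsi : 0 < m + (1 - m) * Rpower t alpha) by nra.
  pose proof (Rpower_tangent (m + (1 - m) * Rpower t alpha) K (1 / q) Hpsi ltac:(lra)) as T.
  unfold A, C.
  replace (M * (Rpower K (1 / q) + 1 / q * Rpower K (1 / q - 1) * (m - K))
           + M * (1 / q * Rpower K (1 / q - 1) * (1 - m)) * Rpower t alpha)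
    with (M * (Rpower K (1 / q) + 1 / q * Rpower K (1 / q - 1) * (m + (1 - m) * Rpower t alpha - K)))
    by ring.
  apply Rmult_le_compat_l; auto. apply T.
  split; [apply Rdiv_le_0_compat; lra|]. apply (Rmult_le_reg_r q); [lra|]. field_simplify; lra.
Qed.

Lemma left_part_bound :
  Rabs (rpow (x - a) th / (b - a) * f (m * x)
        - Gamma (th + 1) / (rpow m th * (b - a)) * J_left th m a x f)
  <= m * M / (th + 1) * rpow ((alpha * m + th + 1) / (alpha + th + 1)) (1 / q)
     * (rpow (x - a) (th + 1) / (b - a)).
Proof.
  destruct mean_constant_bounds as (HmK & HM0 & HA & HC).
  destruct (Req_dec x a) as [-> | Hxa].
  { rewrite Rminus_diag, !rpow_0_l by lra. unfold J_left.
    destruct (Rle_dec (m * a) (m * a)) as [_|n]; [|lra].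
    unfold Rdiv. rewrite !Rmult_0_l, !Rmult_0_r, Rminus_0_r, Rabs_R0. lra. }
  assert (Hax : m * a < m * x) by (apply Rmult_lt_compat_l; lra).
  destruct (fractional_mean_estimate f f' (m * a) (m * x) th alpha A C) as [L [HL Hbound]];
    try lra.
  { intros r Hr. apply Hder. nra. }
  { intros r Hr. set (t := (r - m * a) / (m * x - m * a)).
    assert (Ht : 0 < t <= 1).
    { unfold t. split; [apply Rdiv_lt_0_compat; lra|].
      apply (Rmult_le_reg_r (m * x - m * a)); [lra|]. field_simplify; lra. }
    replace r with (t * (m * x) + m * (1 - t) * a) at 1 by (unfold t; field; lra).
    apply derivative_bound; nra. }
  assert (EJ : J_left th m a x f = / Gamma th * L).
  { unfold J_left. destruct (Rle_dec (m * x) (m * a)); [lra|].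
    f_equal. apply improper_int_unique; auto. }
  destruct (Gamma_pos_succ th Hth) as [HG HGs].
  replace (m * x - m * a) with (m * (x - a)) in Hbound by ring.
  rewrite EJ, HGs, !(rpow_pos_eq (x - a)), (rpow_pos_eq m) by lra.
  eapply Rle_trans; [apply (normalised_mean_bound (x - a)); eauto; lra|].
  right. fold K. rewrite mean_constant, (rpow_pos_eq K) by lra. unfold Rdiv. ring.
Qed.

Lemma right_part_bound :
  Rabs (rpow (b - x) th / (b - a) * f (m * x)
        - Gamma (th + 1) / (rpow m th * (b - a)) * J_right th m x b f)
  <= m * M / (th + 1) * rpow ((alpha * m + th + 1) / (alpha + th + 1)) (1 / q)
     * (rpow (b - x) (th + 1) / (b - a)).
Proof.
  destruct mean_constant_bounds as (HmK & HM0 & HA & HC).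
  destruct (Req_dec x b) as [-> | Hxb].
  { rewrite Rminus_diag, !rpow_0_l by lra. unfold J_right.
    destruct (Rle_dec (m * b) (m * b)) as [_|n]; [|lra].
    unfold Rdiv. rewrite !Rmult_0_l, !Rmult_0_r, Rminus_0_r, Rabs_R0. lra. }
  assert (Hxb' : m * x < m * b) by (apply Rmult_lt_compat_l; lra).
  destruct (fractional_mean_estimate (fun z => f (- z)) (fun z => - f' (- z))
              (- (m * b)) (- (m * x)) th alpha A C) as [L [HL Hbound]]; try lra.
  { intros r Hr. apply derivable_pt_lim_reflect, Hder. nra. }
  { intros r Hr. rewrite Rabs_Ropp. set (t := (r - - (m * b)) / (- (m * x) - - (m * b))).
    assert (Ht : 0 < t <= 1).
    { unfold t. split; [apply Rdiv_lt_0_compat; lra|].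
      apply (Rmult_le_reg_r (- (m * x) - - (m * b))); [lra|]. field_simplify; lra. }
    replace (- r) with (t * (m * x) + m * (1 - t) * b) by (unfold t; field; lra).
    apply derivative_bound; nra. }
  assert (EJ : J_right th m x b f = / Gamma th * L).
  { unfold J_right. destruct (Rle_dec (m * b) (m * x)); [lra|].
    f_equal. apply improper_int_unique; [lra|]. apply is_improper_int_reflect.
    replace (fun y => Rpower (m * b - - y) (th - 1) * f (- y))
      with (weighted (- (m * b)) th (fun z => f (- z))); [exact HL|].
    apply functional_extensionality. intro z. unfold weighted.
    replace (z - - (m * b)) with (m * b - - z) by ring. reflexivity. }
  destruct (Gamma_pos_succ th Hth) as [HG HGs].
  replace (- (m * x) - - (m * b)) with (m * (b - x)) in Hbound by ring.
  rewrite Ropp_involutive in Hbound.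
  rewrite EJ, HGs, !(rpow_pos_eq (b - x)), (rpow_pos_eq m) by lra.
  eapply Rle_trans; [apply (normalised_mean_bound (b - x)); eauto; lra|].
  right. fold K. rewrite mean_constant, (rpow_pos_eq K) by lra. unfold Rdiv. ring.
Qed.

End OneSidedEstimates.

Theorem mainTheorem8 (I : R -> Prop) (f f' : R -> R) (m alpha a b q M x th : R) :
  nonneg_interval I ->
  (forall u, interior I u -> derivable_pt_lim f u (f' u)) ->
  0 < m <= 1 -> 0 <= alpha <= 1 -> a < b ->
  interior I (m * a) -> interior I b ->
  alpha_m_convex alpha m (m * a) b (fun u => rpow (Rabs (f' u)) q) ->
  1 <= q ->
  (forall u, m * a <= u <= b -> Rabs (f' u) <= M) ->
  a <= x <= b -> 0 < th ->
  Rabs ((rpow (x - a) th + rpow (b - x) th) / (b - a) * f (m * x)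
        - Gamma (th + 1) / (rpow m th * (b - a))
          * (J_left th m a x f + J_right th m x b f))
  <= m * M / (th + 1) * rpow ((alpha * m + th + 1) / (alpha + th + 1)) (1 / q)
     * ((rpow (x - a) (th + 1) + rpow (b - x) (th + 1)) / (b - a)).
Proof.
  intros HI Hder Hm Hal Hab Hma Hb Hconv Hq HM Hx Hth.
  (* I lies in [0, oo), hence so does m a, and a >= 0. *)
  assert (Ha : 0 <= a).
  { destruct Hma as [d Hd]. assert (Ima : I (m * a)).
    { apply Hd. unfold disc. rewrite Rminus_diag, Rabs_R0. apply cond_pos. }
    pose proof (proj2 HI _ Ima). nra. }
  assert (Hder' : forall r, m * a <= r <= b -> derivable_pt_lim f r (f' r))
    by (intros r Hr; apply Hder, (interior_between I (m * a) b); auto).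
  set (c := Gamma (th + 1) / (rpow m th * (b - a))).
  set (k := m * M / (th + 1) * rpow ((alpha * m + th + 1) / (alpha + th + 1)) (1 / q)).
  replace ((rpow (x - a) th + rpow (b - x) th) / (b - a) * f (m * x)
           - c * (J_left th m a x f + J_right th m x b f))
    with ((rpow (x - a) th / (b - a) * f (m * x) - c * J_left th m a x f)
          + (rpow (b - x) th / (b - a) * f (m * x) - c * J_right th m x b f)) by (unfold Rdiv; ring).
  replace (k * ((rpow (x - a) (th + 1) + rpow (b - x) (th + 1)) / (b - a)))
    with (k * (rpow (x - a) (th + 1) / (b - a)) + k * (rpow (b - x) (th + 1) / (b - a)))
    by (unfold Rdiv; ring).
  eapply Rle_trans; [apply Rabs_triang|].
  apply Rplus_le_compat; [apply (left_part_bound f f')|apply (right_part_bound f f')]; auto.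
Qed.
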